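(* For any $\mu,\nu\in(\omega\setminus\{0\})\cup\{\infty\}$ there is a complete theory $T_{\mu,\nu}$ and an expansion $T'_{\mu,\nu}$ of it such that ${\rm ar}(T_{\mu,\nu})=\mu$ and ${\rm ar}(T'_{\mu,\nu})=\nu$.
   Context: An expansion of $T$ is a complete theory $T'\supseteq T$ in a language containing that of $T$. For $n\geq1$, a formula of a theory $T$ is $n$-ary if it is $T$-equivalent to a Boolean combination of $T$-formulas each with at most $n$ free variables; $T$ is unary ($1$-ary) if every formula is $T$-equivalent to a Boolean combination of formulas with one free variable and formulas $x\approx y$; for $n\geq2$, $T$ is $n$-ary if all its formulas are $n$-ary; $T$ is $0$-ary if every formula is $T$-equivalent to a sentence. ${\rm ar}(T)$ is the number $n$ such that $T$ is $n$-ary and not $(n-1)$-ary, and ${\rm ar}(T)=\infty$ if $T$ is $n$-ary for no $n$. *)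

From mathcomp Require Import all_boot.
Set Implicit Arguments. Unset Strict Implicit. Unset Printing Implicit Defensive.

(** First-order languages: function symbols (constants = arity 0) and
    relation symbols, each with an arity. Equality is logical. *)
Record language := Language {
  fsym : Type; farity : fsym -> nat;
  rsym : Type; rarity : rsym -> nat }.

Section Syntax.
Variable L : language.

Inductive term : Type :=
  | Var : nat -> term
  | App : forall f : fsym L, ('I_(farity f) -> term) -> term.

Inductive formula : Type :=
  | FFalse : formula
  | FEq : term -> term -> formula
  | FRel : forall r : rsym L, ('I_(rarity r) -> term) -> formula
  | FNot : formula -> formula
  | FAnd : formula -> formula -> formula
  | FOr : formula -> formula -> formula
  | FImp : formula -> formula -> formula
  | FAll : nat -> formula -> formula
  | FEx : nat -> formula -> formula.

Inductive term_occ (x : nat) : term -> Prop :=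
  | occ_var : term_occ x (Var x)
  | occ_app f args i : term_occ x (args i) -> term_occ x (@App f args).

Inductive free (x : nat) : formula -> Prop :=
  | free_eq1 t u : term_occ x t -> free x (FEq t u)
  | free_eq2 t u : term_occ x u -> free x (FEq t u)
  | free_rel r args i : term_occ x (args i) -> free x (@FRel r args)
  | free_not p : free x p -> free x (FNot p)
  | free_and1 p q : free x p -> free x (FAnd p q)
  | free_and2 p q : free x q -> free x (FAnd p q)
  | free_or1 p q : free x p -> free x (FOr p q)
  | free_or2 p q : free x q -> free x (FOr p q)
  | free_imp1 p q : free x p -> free x (FImp p q)
  | free_imp2 p q : free x q -> free x (FImp p q)
  | free_all y p : x <> y -> free x p -> free x (FAll y p)
  | free_ex y p : x <> y -> free x p -> free x (FEx y p).

Definition sentence (p : formula) : Prop := forall x, ~ free x p.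

Definition at_most_free (n : nat) (p : formula) : Prop :=
  exists s : seq nat, size s <= n /\ forall x, free x p -> x \in s.

Inductive bool_comb (B : formula -> Prop) : formula -> Prop :=
  | bc_base p : B p -> bool_comb B p
  | bc_false : bool_comb B FFalse
  | bc_not p : bool_comb B p -> bool_comb B (FNot p)
  | bc_and p q : bool_comb B p -> bool_comb B q -> bool_comb B (FAnd p q)
  | bc_or p q : bool_comb B p -> bool_comb B q -> bool_comb B (FOr p q)
  | bc_imp p q : bool_comb B p -> bool_comb B q -> bool_comb B (FImp p q).

Record structure := Structure {
  dom : Type; dom_inh : dom;
  interpF : forall f : fsym L, ('I_(farity f) -> dom) -> dom;
  interpR : forall r : rsym L, ('I_(rarity r) -> dom) -> Prop }.

Fixpoint eval (M : structure) (a : nat -> dom M) (t : term) : dom M :=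
  match t with
  | Var x => a x
  | App f args => interpF (fun i => eval a (args i))
  end.

Definition upd (M : structure) (a : nat -> dom M) (x : nat) (d : dom M) :=
  fun y => if y == x then d else a y.

Fixpoint sat (M : structure) (a : nat -> dom M) (p : formula) : Prop :=
  match p with
  | FFalse => False
  | FEq t u => eval a t = eval a u
  | FRel r args => interpR (fun i => eval a (args i))
  | FNot q => ~ sat a q
  | FAnd q r => sat a q /\ sat a r
  | FOr q r => sat a q \/ sat a r
  | FImp q r => sat a q -> sat a r
  | FAll x q => forall d, sat (upd a x d) q
  | FEx x q => exists d, sat (upd a x d) q
  end.

(** Theories: sets of formulas (intended to be sentences). *)
Definition theory := formula -> Prop.

Definition model (M : structure) (T : theory) : Prop :=
  forall p, T p -> forall a : nat -> dom M, sat a p.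

Definition entails (T : theory) (p : formula) : Prop :=
  forall M : structure, model M T -> forall a : nat -> dom M, sat a p.

Definition complete (T : theory) : Prop :=
  (forall p, T p -> sentence p) /\
  (exists M : structure, model M T) /\
  (forall p, sentence p -> entails T p \/ entails T (FNot p)).

Definition T_equiv (T : theory) (p q : formula) : Prop :=
  forall M : structure, model M T -> forall a : nat -> dom M, sat a p <-> sat a q.

Definition is_var_eq (p : formula) : Prop := exists x y, p = FEq (Var x) (Var y).

Definition nary (T : theory) (n : nat) : Prop :=
  match n with
  | 0 => forall p, exists q, sentence q /\ T_equiv T p q
  | 1 => forall p, exists q,
           bool_comb (fun r => at_most_free 1 r \/ is_var_eq r) q /\ T_equiv T p q
  | n => forall p, exists q, bool_comb (at_most_free n) q /\ T_equiv T p q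
  end.

(** ar(T) = mu, where [None] encodes infinity *)
Definition arity_is (T : theory) (mu : option nat) : Prop :=
  match mu with
  | Some n => nary T n /\ (forall m, n = m.+1 -> ~ nary T m)
  | None => forall n, ~ nary T n
  end.

End Syntax.

Arguments Var {L}.

Record lang_incl (L L' : language) := LangIncl {
  mapF : fsym L -> fsym L';
  mapF_inj : injective mapF;
  mapF_ar : forall f, farity (mapF f) = farity f;
  mapR : rsym L -> rsym L';
  mapR_inj : injective mapR;
  mapR_ar : forall r, rarity (mapR r) = rarity r }.

Section Translate.
Variables (L L' : language) (m : lang_incl L L').

Fixpoint tr_term (t : term L) : term L' :=
  match t with
  | Var x => Var x
  | App f args => @App L' (mapF m f)
                    (fun i => tr_term (args (cast_ord (mapF_ar m f) i)))
  end.

Fixpoint tr (p : formula L) : formula L' :=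
  match p with
  | FFalse => FFalse L'
  | FEq t u => FEq (tr_term t) (tr_term u)
  | FRel r args => @FRel L' (mapR m r)
                     (fun i => tr_term (args (cast_ord (mapR_ar m r) i)))
  | FNot q => FNot (tr q)
  | FAnd q r => FAnd (tr q) (tr r)
  | FOr q r => FOr (tr q) (tr r)
  | FImp q r => FImp (tr q) (tr r)
  | FAll x q => FAll x (tr q)
  | FEx x q => FEx x (tr q)
  end.
End Translate.

Definition expansion (L L' : language) (T : theory L) (T' : theory L') : Prop :=
  complete T' /\ exists m : lang_incl L L', forall p, T p -> T' (tr m p).

From mathcomp Require Import all_boot.
From Stdlib Require Import ClassicalEpsilon FunctionalExtensionality Classical.
From Stdlib Require List.
Set Implicit Arguments. Unset Strict Implicit. Unset Printing Implicit Defensive.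

(* The model has, for each m, a block of m pairs of points.  An even flip of block m
   exchanges the two points of an even number of its pairs; the orbit relations of
   block m are the orbits of tuples of its points under these flips.  Let block nu
   carry its orbit relations with its points unnamed, and let every other block with
   orbit relations have all its points named.
   - Th M is not (nu-1)-ary.  Flipping a single pair moves a transversal tuple of block
     nu out of its orbit, yet on any nu-1 of its entries this single flip agrees with an
     even flip, which is an automorphism.
   - Th M is nu-ary.  Suppose two assignments agree on equalities, on names, and on the
     orbit relations of nu-tuples of variables.  Then an even flip of block nu followed
     by transpositions of unnamed points outside block nu (both automorphisms for the
     relations in play) carries one assignment to the other.
   With every block carrying unnamed orbit relations the arity is infinite.  The orbit
   blocks of T are those of mu (block mu, or all blocks if mu is infinite); T' adds
   those of nu and names the points of the blocks of mu that are not blocks of nu. *)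

Lemma mem_In (T : eqType) (x : T) (s : seq T) : x \in s <-> List.In x s.
Proof.
elim: s => [|y s IH] //=; rewrite in_cons; split.
- by case/orP => [/eqP ->|/IH]; [left|right].
- by case=> [->|/IH ->]; rewrite ?eqxx ?orbT.
Qed.

Lemma In_allpairs (S T : eqType) (U : Type) (f : S -> T -> U) s t z :
  List.In z [seq f x y | x <- s, y <- t] <->
  exists2 x, x \in s & exists2 y, y \in t & z = f x y.
Proof.
elim: s => [|x s IH] /=; first by split=> // -[].
rewrite List.in_app_iff IH List.in_map_iff; split.
- case=> [[y [<- /mem_In Hy]]|[x' Hx' [y Hy ->]]].
    by exists x; rewrite ?mem_head //; exists y.
  by exists x'; rewrite ?in_cons ?Hx' ?orbT //; exists y.
- case=> x' /[!in_cons] /orP [/eqP ->|Hx'] [y Hy ->].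
    by left; exists y; split => //; apply/mem_In.
  by right; exists x' => //; exists y.
Qed.

Fixpoint tuples (T : Type) (s : seq T) (n : nat) : seq (seq T) :=
  if n is n'.+1 then [seq x :: t | x <- s, t <- tuples s n'] else [:: [::]].

Lemma mem_tuples (T : eqType) (s : seq T) n t :
  (t \in tuples s n) = (size t == n) && all (mem s) t.
Proof.
elim: n t => [|n IH] [|x t] //=.
- by apply/allpairsP => -[[y u] []].
- apply/allpairsP/idP => [[[y u] /= [Hy Hu [-> ->]]]|].
    by move: Hu; rewrite IH eqSS Hy => /andP [-> ->].
  by rewrite eqSS => /and3P [Ht Hx Hall]; exists (x, t); rewrite IH Ht Hall.
Qed.

Lemma size_tuples (T : eqType) (s : seq T) n t : t \in tuples s n -> size t = n.
Proof. by rewrite mem_tuples => /andP [/eqP]. Qed.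

Section FirstOrder.
Variable L : language.
Implicit Types (p q : formula L) (t : term L).

Lemma term_occ_inv x t : term_occ x t ->
  match t with Var y => x = y | App f args => exists i, term_occ x (args i) end.
Proof. by case=> // f args i H; exists i. Qed.

Lemma free_inv x p : free x p ->
  match p with
  | FFalse => False
  | FEq t u => term_occ x t \/ term_occ x u
  | FRel r args => exists i, term_occ x (args i)
  | FNot q => free x q
  | FAnd q r | FOr q r | FImp q r => free x q \/ free x r
  | FAll y q | FEx y q => x <> y /\ free x q
  end.
Proof. case=> *; by [|left|right|eexists; eauto|split]. Qed.

Lemma upd_id (M : structure L) (a : nat -> dom M) x : upd a x (a x) = a.
Proof. by apply: functional_extensionality => y; rewrite /upd; case: eqP => [->|]. Qed.

Lemma eval_coincidence (M : structure L) (a b : nat -> dom M) t :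
  (forall x, term_occ x t -> a x = b x) -> eval a t = eval b t.
Proof.
elim: t => [x|f args IH] H /=; first by apply: H; constructor.
congr (interpF _); apply: functional_extensionality => i; apply: IH => x Hx.
by apply: H; econstructor; eauto.
Qed.

Lemma sat_coincidence (M : structure L) p (a b : nat -> dom M) :
  (forall x, free x p -> a x = b x) -> (sat a p <-> sat b p).
Proof.
elim: p a b => [|t u|r args|p IH|p IHp q IHq|p IHp q IHq|p IHp q IHq|y p IH|y p IH]
  a b H //=; try by [rewrite (IH a b) // => x Hx; apply: H; constructor
                   |rewrite (IHp a b) ?(IHq a b) // => x Hx; apply: H; constructor].
- by rewrite (@eval_coincidence M a b t) ?(@eval_coincidence M a b u) // => x Hx;
    apply: H; [apply: free_eq2|apply: free_eq1].
- suff -> : (fun i => eval a (args i)) = (fun i => eval b (args i)) by [].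
  apply: functional_extensionality => i; apply: eval_coincidence => x Hx.
  by apply: H; econstructor; eauto.
all: have Hupd d x : free x p -> upd a y d x = upd b y d x
       by rewrite /upd; case: eqP => // ? ?; apply: H; constructor.
- by split=> Hp d; [rewrite -(IH _ _ (Hupd d))|rewrite (IH _ _ (Hupd d))].
- by split=> -[d Hd]; exists d; [rewrite -(IH _ _ (Hupd d))|rewrite (IH _ _ (Hupd d))].
Qed.

Fixpoint rel_occ (r : rsym L) p : Prop :=
  match p with
  | FRel r' _ => r' = r
  | FNot q | FAll _ q | FEx _ q => rel_occ r q
  | FAnd q1 q2 | FOr q1 q2 | FImp q1 q2 => rel_occ r q1 \/ rel_occ r q2
  | _ => False
  end.

Section Bijection.
Variables (M : structure L) (s : dom M -> dom M).
Hypothesis s_bij : bijective s.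
Hypothesis s_interpF : forall f args, interpF (fun i => s (args i)) = s (@interpF L M f args).

Lemma eval_map (a : nat -> dom M) t : eval (fun x => s (a x)) t = s (eval a t).
Proof.
elim: t => [x|f args IH] //=.
by rewrite -s_interpF; congr (interpF _); apply: functional_extensionality.
Qed.

Lemma sat_map p :
  (forall r args, rel_occ r p -> (interpR (fun i => s (args i)) <-> @interpR L M r args)) ->
  forall a, sat (fun x => s (a x)) p <-> sat a p.
Proof.
have s_inj := bij_inj s_bij; have [g _ sK] := s_bij.
have Hupd (a : nat -> dom M) y d :
  upd (fun x => s (a x)) y (s d) = (fun x => s (upd a y d x)).
  by apply: functional_extensionality => z; rewrite /upd; case: eqP.
elim: p => [|t u|r args|p IH|p IHp q IHq|p IHp q IHq|p IHp q IHq|y p IH|y p IH]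
  HR a //=; try by [rewrite IH
                   |rewrite IHp ?IHq // => r args H; apply: HR; [right|left]].
- by rewrite !eval_map; split => [/s_inj|->].
- suff -> : (fun i => eval (fun x => s (a x)) (args i)) = (fun i => s (eval a (args i)))
    by apply: HR.
  by apply: functional_extensionality => i; rewrite eval_map.
- split=> H d; first by rewrite -IH // -Hupd.
  by rewrite -(sK d) Hupd IH.
- split=> -[d H]; last by exists (s d); rewrite Hupd IH.
  by exists (g d); rewrite -IH // -Hupd sK.
Qed.

End Bijection.

Fixpoint fv_term t : seq nat :=
  match t with
  | Var x => [:: x]
  | App f args => flatten [seq fv_term (args i) | i <- enum 'I_(farity f)]
  end.

Fixpoint fv p : seq nat :=
  match p with
  | FFalse => [::]
  | FEq t u => fv_term t ++ fv_term u
  | FRel r args => flatten [seq fv_term (args i) | i <- enum 'I_(rarity r)]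
  | FNot q | FAll _ q | FEx _ q => fv q
  | FAnd q r | FOr q r | FImp q r => fv q ++ fv r
  end.

Lemma term_occ_fv x t : term_occ x t -> x \in fv_term t.
Proof.
elim=> [|f args i _ IH] /=; first by rewrite inE.
by apply/flatten_mapP; exists i; rewrite ?mem_enum.
Qed.

Lemma free_fv x p : free x p -> x \in fv p.
Proof.
elim=> /=.
- by move=> t u /term_occ_fv; rewrite mem_cat => ->.
- by move=> t u /term_occ_fv; rewrite mem_cat => ->; rewrite orbT.
- by move=> r args i /term_occ_fv H; apply/flatten_mapP; exists i; rewrite ?mem_enum.
all: by move=> *; rewrite ?mem_cat; by [|apply/orP; left|apply/orP; right].
Qed.

Fixpoint forall_close (l : seq nat) p := if l is x :: l' then FAll x (forall_close l' p) else p.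

Lemma free_forall_close x l p : free x (forall_close l p) -> free x p /\ x \notin l.
Proof.
elim: l => [|y l IH] //= /free_inv [nxy /IH [H1 H2]]; split => //.
by rewrite inE negb_or H2 andbT; apply/eqP.
Qed.

Lemma valid_forall_close (M : structure L) l p :
  (forall a : nat -> dom M, sat a (forall_close l p)) <-> forall a : nat -> dom M, sat a p.
Proof.
elim: l => [|y l IH] //=; rewrite -IH; split=> H a; first by rewrite -(upd_id a y).
by move=> d; apply: H.
Qed.

Definition Th (M : structure L) : theory L :=
  fun p => sentence p /\ forall a : nat -> dom M, sat a p.

Lemma model_Th M : model M (Th M).
Proof. by move=> p []. Qed.

Lemma Th_complete M : complete (Th M).
Proof.
split; [by move=> p []|split; first by exists M; apply: model_Th].
move=> p p_sent; have sat_any (a b : nat -> dom M) : sat a p <-> sat b p.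
  by apply: sat_coincidence => x /p_sent.
case: (classic (forall a : nat -> dom M, sat a p)) => H; [left|right] => N HN a.
  by apply: HN.
apply: HN; split; first by move=> x /free_inv /p_sent.
move=> b /= Hb; apply: H => c; exact/(sat_any b).
Qed.

Lemma T_equiv_Th M p q :
  (forall a : nat -> dom M, sat a p <-> sat a q) -> T_equiv (Th M) p q.
Proof.
move=> H N HN; set iff_pq := FAnd (FImp p q) (FImp q p).
suff /HN /valid_forall_close Hs : Th M (forall_close (fv iff_pq) iff_pq).
  by move=> a; have [] := Hs a.
split; first by move=> x /free_forall_close [/free_fv ->].
by apply/valid_forall_close => a /=; split => /H.
Qed.

Lemma sat_bool_comb (M : structure L) (B : formula L -> Prop) (a b : nat -> dom M) q :
  (forall r, B r -> (sat a r <-> sat b r)) -> bool_comb B q -> (sat a q <-> sat b q).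
Proof. move=> HB; elim => //= *; try tauto; exact: HB. Qed.

Lemma bool_comb_mono (B B' : formula L -> Prop) q :
  (forall r, B r -> B' r) -> bool_comb B q -> bool_comb B' q.
Proof. move=> HB; elim => *; by [apply: bc_base; apply: HB|constructor]. Qed.

Section Types.
Variable M : structure L.
Implicit Types (a b : nat -> dom M) (Phi : seq (formula L)).

Definition agree_on a b Phi := forall phi, List.In phi Phi -> (sat a phi <-> sat b phi).

Fixpoint types_disj Phi (P : (nat -> dom M) -> Prop) : formula L :=
  match Phi with
  | [::] => if excluded_middle_informative (exists a, P a) then FNot (FFalse L) else FFalse L
  | phi :: Phi' => FOr (FAnd phi (types_disj Phi' (fun a => P a /\ sat a phi)))
                       (FAnd (FNot phi) (types_disj Phi' (fun a => P a /\ ~ sat a phi)))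
  end.

Lemma sat_types_disj Phi P b :
  sat b (types_disj Phi P) <-> exists a, P a /\ agree_on a b Phi.
Proof.
elim: Phi P => [|phi Phi IH] P /=.
  case: excluded_middle_informative => [[a Ha]|Hn] /=.
    by split=> [_|_ []]; exists a; split=> // ? [].
  by split=> // -[a [Ha _]]; apply: Hn; exists a.
rewrite !IH; split.
- by case=> -[Hb [a [[Ha Hp] Hq]]]; exists a; split => // psi [<-|/Hq] //; tauto.
- move=> [a [Ha Hq]]; have Hphi := Hq phi (or_introl erefl).
  have Hq' : agree_on a b Phi by move=> psi Hpsi; apply: Hq; right.
  by case: (classic (sat b phi)) => Hb; [left|right]; split => //; exists a; rewrite Hphi.
Qed.

Lemma bool_comb_types_disj (B : formula L -> Prop) Phi P :
  (forall phi, List.In phi Phi -> B phi) -> bool_comb B (types_disj Phi P).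
Proof.
elim: Phi P => [|phi Phi IH] P HB /=.
  by case: excluded_middle_informative => ?; [apply/bc_not|]; apply: bc_false.
have Hphi : bool_comb B phi by apply/bc_base/HB; left.
have HB' psi : List.In psi Phi -> B psi by move=> ?; apply: HB; right.
by apply: bc_or; apply: bc_and; try apply: bc_not; by [|apply: IH].
Qed.

Lemma Th_equiv_bool_comb (B : formula L -> Prop) Phi p :
  (forall phi, List.In phi Phi -> B phi) ->
  (forall a b, agree_on a b Phi -> sat a p -> sat b p) ->
  exists q, bool_comb B q /\ T_equiv (Th M) p q.
Proof.
move=> HB Hdet; exists (types_disj Phi (fun a => sat a p)).
split; first exact: bool_comb_types_disj.
apply: T_equiv_Th => b; rewrite sat_types_disj; split => [Hb|[a [Ha /Hdet]]]; last exact.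
by exists b; split=> // phi _.
Qed.

Lemma not_Th_equiv_bool_comb (B : formula L -> Prop) a b p q :
  (forall r, B r -> (sat a r <-> sat b r)) -> sat a p -> ~ sat b p ->
  bool_comb B q -> ~ T_equiv (Th M) p q.
Proof.
move=> HB Ha Hb Hq Hpq; have := sat_bool_comb HB Hq.
have := Hpq M (@model_Th M) a; have := Hpq M (@model_Th M) b; tauto.
Qed.

End Types.

Definition nary_base (n : nat) (r : formula L) := at_most_free n r \/ is_var_eq r.

Lemma nary_bool_comb (T : theory L) n : nary T n ->
  forall p, exists q, bool_comb (nary_base n) q /\ T_equiv T p q.
Proof.
case: n => [|[|n]] /= Hn p; have [q [Hq Hpq]] := Hn p; exists q; split=> //.
- by apply: bc_base; left; exists [::]; split => // x /Hq.
- by apply: bool_comb_mono Hq => r; left.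
Qed.

Lemma nary_of_bool_comb (T : theory L) n : 0 < n ->
  (forall p, exists q, bool_comb (nary_base n) q /\ T_equiv T p q) -> nary T n.
Proof.
case: n => [//|[|n]] _ H p //=.
have [q [Hq Hpq]] := H p; exists q; split => //; apply: bool_comb_mono Hq => r.
case=> [//|[x [y ->]]]; exists [:: x; y]; split => // z.
by case/free_inv => /term_occ_inv ->; rewrite !inE eqxx ?orbT.
Qed.

End FirstOrder.

Section Transpositions.
Variable T : eqType.
Implicit Types (u v x : T) (ps : seq (T * T)).

Definition swap u v x : T := if x == u then v else if x == v then u else x.

Lemma swapK u v : involutive (swap u v).
Proof.
move=> x; rewrite /swap; case: (eqVneq x u) => [->|xu]; first by rewrite eqxx; case: eqP.
case: (eqVneq x v) => [->|xv]; first by rewrite eqxx.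
by rewrite (negbTE xu) (negbTE xv).
Qed.

Lemma swap_id u v x : x != u -> x != v -> swap u v x = x.
Proof. by rewrite /swap => /negbTE -> /negbTE ->. Qed.

Definition swaps ps x : T := foldr (fun uv y => swap uv.1 uv.2 y) x ps.

Lemma swaps_bij ps : bijective (swaps ps).
Proof.
elim: ps => [|uv ps IH]; first by exists id.
exact: bij_comp (inv_bij (swapK uv.1 uv.2)) IH.
Qed.

Variable movable : pred T.

Definition movable_pairs ps := all (fun uv => movable uv.1 && movable uv.2) ps.

Lemma movable_swap u v x : movable u -> movable v -> movable (swap u v x) = movable x.
Proof.
move=> Hu Hv; rewrite /swap; case: (eqVneq x u) => [->|_]; first by rewrite Hu Hv.
by case: (eqVneq x v) => [->|_] //; rewrite Hu Hv.
Qed.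

Lemma movable_swaps ps x : movable_pairs ps -> movable (swaps ps x) = movable x.
Proof. by elim: ps => [|[u v] ps IH] //= /andP [/andP [Hu Hv] /IH <-]; rewrite movable_swap. Qed.

Lemma swaps_id ps x : movable_pairs ps -> ~~ movable x -> swaps ps x = x.
Proof.
elim: ps => [|[u v] ps IH] //= /andP [/andP [Hu Hv] Hps] Hx; rewrite IH //.
by apply: swap_id; apply: contraNneq Hx => ->.
Qed.

Lemma exists_swaps (I : eqType) (a b : I -> T) (s : seq I) :
  {in s &, forall i j, (a i == a j) = (b i == b j)} ->
  {in s, forall i, ~~ movable (a i) -> a i = b i} ->
  {in s, forall i, movable (a i) = movable (b i)} ->
  exists2 ps, movable_pairs ps & {in s, forall i, swaps ps (a i) = b i}.
Proof.
elim: s => [|i s IH] Heq Hfix Hmov; first by exists [::].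
have sub : {subset s <= i :: s} by move=> j Hj; rewrite inE Hj orbT.
have [ps Hps Hs] := IH (sub_in2 sub Heq) (sub_in1 sub Hfix) (sub_in1 sub Hmov).
have Hi := mem_head i s; set c := swaps ps (a i).
case: (eqVneq c (b i)) => [Ec|Nc].
  by exists ps => // j /[!inE] /orP [/eqP ->|/Hs].
have mov_ai : movable (a i).
  by apply: contraNT Nc => Hai; rewrite /c swaps_id // (Hfix i Hi Hai).
exists ((c, b i) :: ps); first by rewrite /= /c movable_swaps // -Hmov ?mov_ai.
move=> j /[!inE] /orP [/eqP ->|Hj]; first by rewrite /= /swap -/c eqxx.
have Hj' := sub j Hj.
rewrite /= Hs //; apply: swap_id.
- apply: contra_neq Nc => E.
  have /eqP Ea : a j == a i by rewrite -(inj_eq (bij_inj (swaps_bij ps))) Hs // E.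
  by rewrite -E; apply/eqP; rewrite -(Heq _ _ Hj' Hi) Ea.
- apply: contra_neq Nc => E.
  have /eqP Ea : a j == a i by rewrite (Heq _ _ Hj' Hi) E.
  by rewrite /c -Ea Hs.
Qed.

End Transpositions.

(* The point (m, i, e) is side e of the i-th of the m pairs making up block m. *)
Definition point := (nat * nat * bool)%type.

Definition in_block m (d : point) : bool := (d.1.1 == m) && (d.1.2 < m).

Definition block m : seq point := [seq (m, i, e) | i <- iota 0 m, e <- [:: false; true]].

Lemma mem_block m d : (d \in block m) = in_block m d.
Proof.
case: d => [[k i] e]; apply/allpairsP/andP => [[[j e'] /= [Hj _ [-> -> _]]]|[/eqP /= -> Hi]].
  by rewrite mem_iota in Hj.
by exists (i, e); rewrite mem_iota /= Hi; case: e.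
Qed.

Definition flip m (f : nat -> bool) (d : point) : point :=
  if in_block m d then (d.1, d.2 (+) f d.1.2) else d.

Lemma in_block_flip k m f d : in_block k (flip m f d) = in_block k d.
Proof. by rewrite /flip; case: ifP. Qed.

Lemma flip_in m f d : in_block m d -> flip m f d = (d.1, d.2 (+) f d.1.2).
Proof. by rewrite /flip => ->. Qed.

Lemma flip_out m f d : ~~ in_block m d -> flip m f d = d.
Proof. by rewrite /flip => /negbTE ->. Qed.

Lemma flip_other_block k m f d : in_block k d -> k != m -> flip m f d = d.
Proof. by case/andP => /eqP <- _ km; rewrite flip_out // /in_block (negbTE km). Qed.

Lemma flip_eq_in_block m f g d :
  in_block m d -> (flip m f d == flip m g d) = (f d.1.2 == g d.1.2).
Proof.
by move=> Hd; rewrite !flip_in // xpair_eqE eqxx /=; case: d.2; case: (f _); case: (g _).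
Qed.

Lemma flip_flip m g f d : flip m g (flip m f d) = flip m (fun i => g i (+) f i) d.
Proof.
case: (boolP (in_block m d)) => H; last by rewrite !flip_out.
by rewrite !flip_in ?in_block_flip //= -addbA [f _ (+) g _]addbC.
Qed.

Lemma flip0 m : flip m (fun=> false) =1 id.
Proof. by case=> [[k i] e]; rewrite /flip addbF; case: ifP. Qed.

Lemma flipK m f : involutive (flip m f).
Proof.
move=> d; rewrite flip_flip -[RHS](flip0 m d); congr flip.
by apply: functional_extensionality => i; rewrite addbb.
Qed.

Lemma odd_count_addb (T : Type) (g f : pred T) s :
  odd (count (fun x => g x (+) f x) s) = odd (count g s) (+) odd (count f s).
Proof.
elim: s => //= x s IH; rewrite !oddD IH.
by case: (g x); case: (f x); case: (odd (count g s)); case: (odd (count f s)).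
Qed.

Definition even_flip m (f : nat -> bool) := ~~ odd (count f (iota 0 m)).

Lemma even_flip0 m : even_flip m (fun=> false).
Proof. by rewrite /even_flip count_pred0. Qed.

Lemma even_flip_xor m g f :
  even_flip m g -> even_flip m f -> even_flip m (fun i => g i (+) f i).
Proof. by rewrite /even_flip odd_count_addb => /negbTE -> /negbTE ->. Qed.

Lemma even_flip1 f : even_flip 1 f -> f 0 = false.
Proof. by rewrite /even_flip /=; case: (f 0). Qed.

Definition in_orbit m (w u : seq point) : Prop :=
  all (in_block m) w /\ exists2 f, even_flip m f & u = map (flip m f) w.

Lemma in_orbit_refl m w : all (in_block m) w -> in_orbit m w w.
Proof.
by move=> Hw; split=> //; exists (fun=> false); rewrite ?even_flip0 ?(eq_map (flip0 m)) ?map_id.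
Qed.

Lemma in_orbit_block m w u : in_orbit m w u -> all (in_block m) u.
Proof.
by case=> Hw [f _ ->]; rewrite all_map; apply: sub_all Hw => d; rewrite /= in_block_flip.
Qed.

Lemma in_orbit_flip m g w u :
  even_flip m g -> in_orbit m w (map (flip m g) u) <-> in_orbit m w u.
Proof.
move=> Hg; split=> -[Hw [f Hf Hu]]; split=> //.
  exists (fun i => g i (+) f i); first exact: even_flip_xor.
  by rewrite -(mapK (flipK m g) u) Hu -map_comp; apply: eq_map => d /=; rewrite flip_flip.
exists (fun i => g i (+) f i); first exact: even_flip_xor.
by rewrite Hu -map_comp; apply: eq_map => d /=; rewrite flip_flip.
Qed.

Lemma in_orbit_fix m (h : point -> point) w u :
  injective h -> {in in_block m, h =1 id} -> in_orbit m w (map h u) <-> in_orbit m w u.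
Proof.
move=> h_inj h_fix; suff fix_u : in_orbit m w (map h u) \/ in_orbit m w u -> map h u = u.
  by split=> Hu; [rewrite -(fix_u (or_introl Hu))|rewrite (fix_u (or_intror Hu))].
move=> Hu; apply: map_id_in => d du; case: Hu => /in_orbit_block /allP Hu.
  by apply: h_inj; rewrite h_fix //; apply: Hu; apply: map_f.
by apply: h_fix; apply: Hu.
Qed.

(* [inl (m, w)] is the orbit of the tuple [w] under the even flips of block [m];
   [inr d] is the singleton [{d}], a name for [d]. *)
Definition sym := ((nat * seq point) + point)%type.

Definition sym_arity (r : sym) : nat := if r is inl (_, w) then size w else 1.

Definition sym_interp (r : sym) : ('I_(sym_arity r) -> point) -> Prop :=
  match r as r0 return ('I_(sym_arity r0) -> point) -> Prop with
  | inl (m, w) => fun args => in_orbit m w (codom args)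
  | inr d => fun args => forall i, args i = d
  end.
Arguments sym_interp : clear implicits.

Definition sym_support (r : sym) : pred point :=
  match r with inl (m, _) => in_block m | inr d => fun e => e == d end.

Lemma codom_comp (T : finType) (U V : Type) (h : U -> V) (f : T -> U) :
  codom (fun i => h (f i)) = map h (codom f).
Proof. by rewrite !codomE -map_comp. Qed.

Lemma sym_interp_fix r (h : point -> point) args : injective h -> {in sym_support r, h =1 id} ->
  sym_interp r (fun i => h (args i)) <-> sym_interp r args.
Proof.
case: r args => [[m w]|d] args h_inj h_fix /=.
  by rewrite (codom_comp h); exact: in_orbit_fix h_inj h_fix.
have hd : h d = d := h_fix d (eqxx d).
by split=> H i; [apply: h_inj; rewrite hd|rewrite H].
Qed.

Lemma sym_interp_flip m g w args : even_flip m g ->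
  sym_interp (inl (m, w)) (fun i => flip m g (args i)) <-> sym_interp (inl (m, w)) args.
Proof. by move=> Hg /=; rewrite (codom_comp (flip m g)); apply: in_orbit_flip. Qed.

Definition sym_ok (A N : pred nat) (r : sym) : bool :=
  match r with inl (m, _) => A m | inr d => N d.1.1 end.

Definition blocks_lang (A N : pred nat) : language :=
  @Language void (fun=> 0) {r : sym | sym_ok A N r} (fun r => sym_arity (sval r)).

Definition blocks_struct (A N : pred nat) : structure (blocks_lang A N) :=
  @Structure (blocks_lang A N) point (0, 0, false) (fun f => match f with end)
    (fun r => sym_interp (sval r)).

Section BlocksFormulas.
Variables A N : pred nat.
Local Notation M := (blocks_struct A N).
Local Notation form := (formula (blocks_lang A N)).
Implicit Types (a : nat -> point) (p : form).

Lemma blocks_sat_map (h : point -> point) p : bijective h ->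
  (forall r args, rel_occ r p ->
     (sym_interp (sval r) (fun i => h (args i)) <-> sym_interp (sval r) args)) ->
  forall a, sat (M := M) (fun x => h (a x)) p <-> sat (M := M) a p.
Proof. by move=> h_bij Hr a; apply: sat_map => // -[]. Qed.

(* Both atoms are [FFalse] when their relation symbol is not in the language. *)
Definition name_atom x c : form :=
  if insub (inr c : sym) is Some r then @FRel (blocks_lang A N) r (fun=> Var x) else FFalse _.

Definition orbit_atom m (t : seq nat) (w : seq point) : form :=
  if insub (inl (m, w) : sym) is Some r then @FRel (blocks_lang A N) r (fun i => Var (nth 0 t i))
  else FFalse _.

Lemma sat_name_atom a x c : N c.1.1 -> sat (M := M) a (name_atom x c) <-> a x = c.
Proof.
move=> Nc; rewrite /name_atom; case: insubP => [[r ok] _ /= Er|]; last by rewrite /= Nc.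
by subst r; split => [/(_ ord0)|H i].
Qed.

Lemma sat_orbit_atom a m t w : A m -> size t = size w ->
  sat (M := M) a (orbit_atom m t w) <-> in_orbit m w (map a t).
Proof.
move=> Am Htw; rewrite /orbit_atom; case: insubP => [[r ok] _ /= Er|]; last by rewrite /= Am.
subst r => /=; rewrite codomE.
suff -> : [seq a (nth 0 t (val i)) | i <- enum 'I_(size w)] = map a t by [].
by rewrite -[in RHS](mkseq_nth 0 t) /mkseq -map_comp Htw -val_enum_ord -map_comp.
Qed.

Lemma free_name_atom y x c : free y (name_atom x c) -> y = x.
Proof. by rewrite /name_atom; case: insubP => [r _ _|_] /free_inv // -[i /term_occ_inv]. Qed.

Lemma free_orbit_atom y m t w : size t = size w -> free y (orbit_atom m t w) -> y \in t.
Proof.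
move=> Htw; rewrite /orbit_atom; case: insubP => [[r ok] _ /= Er|_] /free_inv //.
by subst r => -[i /term_occ_inv ->]; rewrite mem_nth // Htw.
Qed.

End BlocksFormulas.

Section NotNary.
Variables (A N : pred nat) (nu : nat).
Hypotheses (nu_gt0 : 0 < nu) (A_nu : A nu) (N_nu : ~~ N nu).
Local Notation M := (blocks_struct A N).
Local Notation form := (formula (blocks_lang A N)).

Lemma sat_flip g p (a : nat -> point) : even_flip nu g ->
  sat (M := M) (fun x => flip nu g (a x)) p <-> sat (M := M) a p.
Proof.
move=> Hg; apply: blocks_sat_map => [|[[[m w]|d] ok] args _]; first exact: inv_bij (flipK nu g).
- case: (eqVneq m nu) => [Em|m_nu]; first by subst m; apply: sym_interp_flip.
  by apply: sym_interp_fix => [|e /flip_other_block]; [apply: inv_inj (flipK nu g)|apply].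
- apply: sym_interp_fix => [|e /eqP ->]; first exact: inv_inj (flipK nu g).
  by apply: flip_out; apply: contraNN N_nu => /andP [/eqP <- _].
Qed.

(* [beta] is [alpha] followed by the odd flip of pair 0 alone; on any [nu - 1] variables
   it agrees with [alpha] followed by an even flip. *)
Definition alpha (y : nat) : point := (nu, minn y nu.-1, false).
Definition beta (y : nat) : point := flip nu (pred1 0) (alpha y).

Lemma in_block_alpha y : in_block nu (alpha y).
Proof. by rewrite /in_block /= eqxx (leq_ltn_trans (geq_minr _ _)) // ltn_predL. Qed.

Lemma flip_alpha g y : flip nu g (alpha y) = (nu, minn y nu.-1, g (minn y nu.-1)).
Proof. by rewrite flip_in ?in_block_alpha. Qed.

Definition orbit_formula : form := orbit_atom A N nu (iota 0 nu) (map alpha (iota 0 nu)).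

Lemma sat_alpha : sat (M := M) alpha orbit_formula.
Proof.
rewrite sat_orbit_atom ?size_map //; apply: in_orbit_refl.
by apply/allP => d /mapP [y _ ->]; apply: in_block_alpha.
Qed.

Lemma not_sat_beta : ~ sat (M := M) beta orbit_formula.
Proof.
rewrite sat_orbit_atom ?size_map // => -[_ [f Hf /eqP]]; rewrite -map_comp.
have pair_alpha i : i < nu -> minn i nu.-1 = i by move=> Hi; apply/minn_idPl; rewrite -ltnS prednK.
move=> /eqP/eq_in_map beta_f; move: Hf; rewrite /even_flip (@eq_in_count _ _ (pred1 0)).
  by rewrite (count_uniq_mem _ (iota_uniq 0 nu)) mem_iota add0n nu_gt0.
move=> i; rewrite mem_iota => /= Hi; have := beta_f i; rewrite mem_iota => /(_ Hi).
by rewrite /beta /= !flip_alpha pair_alpha // => -[].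
Qed.

Lemma sat_alpha_beta r : nary_base nu.-1 r -> sat (M := M) alpha r <-> sat (M := M) beta r.
Proof.
case=> [[s [Hs Hfree]]|[x [y ->]]]; last by rewrite /= /beta; split=> [->|/(inv_inj (flipK _ _))].
have [j j_lt j_notin] : exists2 j, j < nu & j \notin map (minn ^~ nu.-1) s.
  have [/allP covered|/allPn [j]] := boolP (all (mem (map (minn ^~ nu.-1) s)) (iota 0 nu)).
    have := uniq_leq_size (iota_uniq 0 nu) covered.
    by rewrite size_iota size_map => /leq_trans/(_ Hs); rewrite leqNgt ltn_predL nu_gt0.
  by rewrite mem_iota => /= j_lt j_notin; exists j.
set g := fun i => (i == 0) (+) (i == j).
have Hg : even_flip nu g.
  rewrite /even_flip odd_count_addb !(count_uniq_mem _ (iota_uniq 0 nu)).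
  by rewrite !mem_iota /= nu_gt0 j_lt.
rewrite -(@sat_flip g r alpha Hg); apply: sat_coincidence => y /Hfree Hy.
rewrite /beta !flip_alpha /g /=; congr (_, _, _).
suff /negbTE -> : minn y nu.-1 != j by rewrite addbF.
by apply: contraNneq j_notin => <-; apply: map_f.
Qed.

Lemma blocks_not_nary : ~ nary (Th M) nu.-1.
Proof.
move=> /nary_bool_comb /(_ orbit_formula) [q [Hq Hpq]].
exact: not_Th_equiv_bool_comb sat_alpha_beta sat_alpha not_sat_beta Hq Hpq.
Qed.

End NotNary.

Lemma blocks_term_var A N (t : term (blocks_lang A N)) : exists x, t = Var x.
Proof. by case: t => [x|[]]; exists x. Qed.

Section Expansion.
Variables A N A' N' : pred nat.
Hypotheses (sub_A : subpred A A') (sub_N : subpred N N').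

Lemma sym_ok_sub r : sym_ok A N r -> sym_ok A' N' r.
Proof. by case: r => [[m w]|d] /=; [apply: sub_A|apply: sub_N]. Qed.

Definition blocks_map_sym (r : rsym (blocks_lang A N)) : rsym (blocks_lang A' N') :=
  exist _ (sval r) (sym_ok_sub (svalP r)).

Lemma blocks_map_sym_inj : injective blocks_map_sym.
Proof. by move=> r1 r2 E; apply: val_inj; apply: (congr1 sval E). Qed.

Definition blocks_incl : lang_incl (blocks_lang A N) (blocks_lang A' N') :=
  @LangIncl (blocks_lang A N) (blocks_lang A' N') id (fun f g fg => fg) (fun=> erefl)
    blocks_map_sym blocks_map_sym_inj (fun=> erefl).

Lemma sat_tr p : forall a : nat -> point,
  sat (M := blocks_struct A' N') a (tr blocks_incl p) <-> sat (M := blocks_struct A N) a p.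
Proof.
elim: p => [|t u|r args|p IH|p IHp q IHq|p IHp q IHq|p IHp q IHq|y p IH|y p IH] a //=.
- by have [x ->] := blocks_term_var t; have [z ->] := blocks_term_var u.
- suff -> : (fun i => eval (M := blocks_struct A' N') a
                 (tr_term blocks_incl (args (cast_ord (mapR_ar blocks_incl r) i))))
           = (fun i => eval (M := blocks_struct A N) a (args i)) by [].
  apply: functional_extensionality => i; rewrite cast_ord_id.
  by have [x ->] := blocks_term_var (args i).
- by rewrite IH.
- by rewrite IHp IHq.
- by rewrite IHp IHq.
- by rewrite IHp IHq.
- by split=> H d; apply/IH; apply: H.
- by split=> -[d /IH H]; exists d.
Qed.

Lemma free_tr x p : free x (tr blocks_incl p) -> free x p.
Proof.
elim: p => [|t u|r args|p IH|p IHp q IHq|p IHp q IHq|p IHp q IHq|y p IH|y p IH] /= /free_inv //;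
  try by [move/IH; constructor|case=> [/IHp|/IHq]; constructor|case=> [? /IH]; constructor].
- have [z ->] := blocks_term_var t; have [z' ->] := blocks_term_var u.
  by case=> /term_occ_inv ->; [apply: free_eq1|apply: free_eq2]; constructor.
- case=> i; set j := cast_ord _ i; have [z E] := blocks_term_var (args j).
  by rewrite E /= => /term_occ_inv ->; apply: (@free_rel _ _ r args j); rewrite E; constructor.
Qed.

Lemma blocks_expansion : expansion (Th (blocks_struct A N)) (Th (blocks_struct A' N')).
Proof.
split; first exact: Th_complete.
exists blocks_incl => p [p_sent p_valid]; split; first by move=> x /free_tr /p_sent.
by move=> a; rewrite sat_tr.
Qed.

End Expansion.

Section Nary.
Variables (A N : pred nat) (nu : nat).
Hypotheses (nu_gt0 : 0 < nu) (A_nu : A nu) (N_nu : ~~ N nu)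
  (N_other : forall k, A k -> k != nu -> N k).
Local Notation M := (blocks_struct A N).
Local Notation form := (formula (blocks_lang A N)).
Implicit Types (p : form) (a b : nat -> point).

Fixpoint syms p : seq sym :=
  match p with
  | FRel r _ => [:: sval r]
  | FNot q | FAll _ q | FEx _ q => syms q
  | FAnd q1 q2 | FOr q1 q2 | FImp q1 q2 => syms q1 ++ syms q2
  | _ => [::]
  end.

Lemma rel_occ_syms r p : rel_occ r p -> sval r \in syms p.
Proof.
elim: p => //= [r' _ ->|p IHp q IHq|p IHp q IHq|p IHp q IHq]; first by rewrite inE.
all: by rewrite mem_cat => -[/IHp|/IHq] ->; rewrite ?orbT.
Qed.

Lemma syms_ok r p : r \in syms p -> sym_ok A N r.
Proof.
elim: p => //= [r' _|p IHp q IHq|p IHp q IHq|p IHp q IHq].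
  by rewrite inE => /eqP ->; exact: (svalP r').
all: by rewrite mem_cat => /orP [/IHp|/IHq].
Qed.

Definition named_pts p : seq point :=
  flatten [seq match r with inl (m, _) => if m == nu then [::] else block m | inr d => [:: d] end
          | r <- syms p].

Lemma named_pts_named p c : c \in named_pts p -> N c.1.1.
Proof.
case/flatten_mapP => -[[m w]|d] /syms_ok /=; last by rewrite inE => Nd /eqP ->.
by case: eqVneq => // m_nu Am; rewrite mem_block => /andP [/eqP -> _]; apply: N_other.
Qed.

Definition movable p (d : point) := (d \notin named_pts p) && ~~ in_block nu d.

Lemma support_immovable r p d : rel_occ r p -> sym_support (sval r) d -> ~~ movable p d.
Proof.
move=> /rel_occ_syms Hr; rewrite /movable negb_and !negbK.
case: (sval r) Hr => [[m w]|e] Hr /= Hd; last first.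
  by apply/orP; left; apply/flatten_mapP; exists (inr e); rewrite //= inE.
case: (eqVneq m nu) => [<-|m_nu]; first by rewrite Hd orbT.
by apply/orP; left; apply/flatten_mapP; exists (inl (m, w)); rewrite //= (negbTE m_nu) mem_block.
Qed.

Lemma sat_swaps p ps a : movable_pairs (movable p) ps ->
  sat (M := M) (fun x => swaps ps (a x)) p <-> sat (M := M) a p.
Proof.
move=> Hps; apply: blocks_sat_map (swaps_bij ps) _ a => r args Hr.
apply: sym_interp_fix => [|d Hd]; first exact: bij_inj (swaps_bij ps).
by apply: swaps_id Hps _; apply: support_immovable Hr Hd.
Qed.

Definition atoms p : seq form :=
  [seq FEq (Var x) (Var y) | x <- fv p, y <- fv p] ++
  [seq name_atom A N x c | x <- fv p, c <- named_pts p] ++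
  [seq orbit_atom A N nu t w | t <- tuples (fv p) nu, w <- tuples (block nu) nu].

Lemma atoms_nary_base p phi : List.In phi (atoms p) -> nary_base nu phi.
Proof.
rewrite !List.in_app_iff !In_allpairs.
case=> [[x _ [y _ ->]]|[[x _ [c _ ->]]|[t /size_tuples size_t [w /size_tuples size_w ->]]]].
- by right; exists x, y.
- by left; exists [:: x]; split=> // z /free_name_atom ->; rewrite inE.
left; exists t; split=> [|z]; first by rewrite size_t.
by apply: free_orbit_atom; rewrite size_t size_w.
Qed.

Section Agree.
Variables (p : form) (a b : nat -> point).
Hypothesis agree_ab : agree_on (M := M) a b (atoms p).

Lemma agree_eq x y : x \in fv p -> y \in fv p -> (a x == a y) = (b x == b y).
Proof.
move=> Hx Hy; have /agree_ab /= E : List.In (FEq (Var x) (Var y) : form) (atoms p).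
  by rewrite List.in_app_iff In_allpairs; left; exists x => //; exists y.
by case: E => ? ?; apply/eqP/eqP.
Qed.

Lemma agree_name x c : x \in fv p -> c \in named_pts p -> (a x == c) = (b x == c).
Proof.
move=> Hx Hc; have Nc := named_pts_named Hc.
have /agree_ab E : List.In (name_atom A N x c) (atoms p).
  by rewrite !List.in_app_iff !In_allpairs; right; left; exists x => //; exists c.
by move: E; rewrite !sat_name_atom // => -[? ?]; apply/eqP/eqP.
Qed.

Lemma agree_orbit t w : t \in tuples (fv p) nu -> w \in tuples (block nu) nu ->
  in_orbit nu w (map a t) <-> in_orbit nu w (map b t).
Proof.
move=> Ht Hw; have size_tw : size t = size w by rewrite (size_tuples Ht) (size_tuples Hw).
have /agree_ab E : List.In (orbit_atom A N nu t w) (atoms p).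
  by rewrite !List.in_app_iff !In_allpairs; right; right; exists t => //; exists w.
by rewrite !sat_orbit_atom in E.
Qed.

Lemma nseq_tuples x : x \in fv p -> nseq nu x \in tuples (fv p) nu.
Proof. by move=> Hx; rewrite mem_tuples size_nseq eqxx; apply/allP => y /nseqP [->]. Qed.

Lemma agree_block x : x \in fv p -> in_block nu (a x) = in_block nu (b x).
Proof.
move=> /nseq_tuples Ht; have E w : w \in tuples (block nu) nu ->
    in_orbit nu w (nseq nu (a x)) <-> in_orbit nu w (nseq nu (b x)).
  by rewrite -!map_nseq; apply: agree_orbit.
have tuple_e e : in_block nu e -> nseq nu e \in tuples (block nu) nu.
  by rewrite -mem_block mem_tuples size_nseq eqxx => He; apply/allP => d /nseqP [-> _].
have refl_e e : in_block nu e -> in_orbit nu (nseq nu e) (nseq nu e).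
  by move=> He; apply: in_orbit_refl; apply/allP => d /nseqP [->].
have block_e e e' : in_orbit nu (nseq nu e) (nseq nu e') -> in_block nu e'.
  by move/in_orbit_block/allP; apply; rewrite mem_nseq nu_gt0 /=.
apply/idP/idP => Hx; [apply: (block_e (a x))|apply: (block_e (b x))];
  [apply/(E _ (tuple_e _ Hx))|apply/(E _ (tuple_e _ Hx))]; exact: refl_e.
Qed.

Lemma flip_of_orbit t : t \in tuples (fv p) nu -> all (in_block nu) (map a t) ->
  exists2 f, even_flip nu f & map b t = map (flip nu f) (map a t).
Proof.
move=> Ht Hin; have Hw : map a t \in tuples (block nu) nu.
  rewrite mem_tuples size_map (size_tuples Ht) eqxx; apply/allP => d Hd.
  by have := allP Hin d Hd; rewrite -mem_block.
by have [_] := (agree_orbit Ht Hw).1 (in_orbit_refl Hin).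
Qed.

Lemma flip_agree_pair x y f : x \in fv p -> y \in fv p ->
  in_block nu (a x) -> in_block nu (a y) -> (a x).1.2 = (a y).1.2 ->
  even_flip nu f -> b y = flip nu f (a y) -> b x = flip nu f (a x).
Proof.
move=> Hx Hy Hax Hay same_pair Hf Hby.
have Ht : x :: nseq nu.-1 y \in tuples (fv p) nu.
  rewrite mem_tuples /= size_nseq prednK // eqxx Hx /=.
  by apply/allP => z /nseqP [-> _].
have Hall : all (in_block nu) (map a (x :: nseq nu.-1 y)).
  by rewrite /= Hax map_nseq; apply/allP => d /nseqP [-> _].
have [g Hg] := flip_of_orbit Ht Hall; rewrite /= !map_nseq => -[bx rest].
have fg : f (a x).1.2 = g (a x).1.2.
  case: (ltnP 1 nu) => [nu_gt1|nu_le1].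
    move/(congr1 (nth (b y) ^~ 0)): rest; rewrite !nth_nseq ltn_predRL nu_gt1 => by_g.
    by apply/eqP; rewrite same_pair -(flip_eq_in_block _ _ Hay) -Hby by_g.
  have nu1 : nu = 1 by apply/eqP; rewrite eqn_leq nu_le1 nu_gt0.
  have x0 : (a x).1.2 = 0 by move: Hax; rewrite nu1 => /andP [_]; rewrite ltnS leqn0 => /eqP.
  by move: Hf Hg; rewrite nu1 x0 => /even_flip1 -> /even_flip1 ->.
by rewrite bx; apply/eqP; rewrite flip_eq_in_block // fg.
Qed.

Definition pair_rep x0 i := head x0 [seq z <- fv p | in_block nu (a z) && ((a z).1.2 == i)].

Lemma pair_rep_in x0 i : x0 \in fv p -> in_block nu (a x0) ->
  pair_rep x0 i \in fv p /\ in_block nu (a (pair_rep x0 i)).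
Proof.
rewrite /pair_rep; case E : [seq z <- _ | _] => [|z l] //= _ _.
have : z \in [seq z <- fv p | in_block nu (a z) && ((a z).1.2 == i)] by rewrite E mem_head.
by rewrite mem_filter => /andP [/andP [-> _] ->].
Qed.

Lemma pair_rep_pair x0 x : x \in fv p -> in_block nu (a x) ->
  (a (pair_rep x0 (a x).1.2)).1.2 = (a x).1.2.
Proof.
move=> Hx Hax; rewrite /pair_rep; set l := [seq z <- _ | _].
have : x \in l by rewrite mem_filter Hax eqxx Hx.
case E : l => [|z l'] //= _; have : z \in l by rewrite E mem_head.
by rewrite mem_filter => /andP [/andP [_ /eqP]].
Qed.

Lemma flip_on_block : exists2 f, even_flip nu f &
  forall x, x \in fv p -> in_block nu (a x) -> b x = flip nu f (a x).
Proof.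
have [/hasP [x0 Hx0 Hax0]|/hasPn none] := boolP (has (fun x => in_block nu (a x)) (fv p)).
  set t := map (pair_rep x0) (iota 0 nu).
  have Ht : t \in tuples (fv p) nu.
    rewrite mem_tuples size_map size_iota eqxx.
    by apply/allP => _ /mapP [i _ ->]; have [] := pair_rep_in i Hx0 Hax0.
  have Hall : all (in_block nu) (map a t).
    by apply/allP => _ /mapP [_ /mapP [i _ ->] ->]; have [] := pair_rep_in i Hx0 Hax0.
  have [f Hf] := flip_of_orbit Ht Hall; rewrite -!map_comp => /eq_in_map brep.
  exists f => // x Hx Hax; have [Hr Har] := pair_rep_in (a x).1.2 Hx0 Hax0.
  apply: (flip_agree_pair Hx Hr Hax Har (esym (pair_rep_pair x0 Hx Hax)) Hf).
  by apply: brep; rewrite mem_iota add0n; case/andP: Hax.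
by exists (fun=> false) => [|x /none /negP]; [exact: even_flip0|].
Qed.

Lemma sat_transfer : sat (M := M) a p -> sat (M := M) b p.
Proof.
have [f Hf Hflip] := flip_on_block; set a1 := fun x => flip nu f (a x).
have [ps Hps Hs] : exists2 ps, movable_pairs (movable p) ps &
    {in fv p, forall x, swaps ps (a1 x) = b x}.
  apply: exists_swaps => [x y Hx Hy|x Hx|x Hx]; rewrite /a1.
  - by rewrite (inj_eq (inv_inj (flipK nu f))) agree_eq.
  - rewrite /movable negb_and !negbK in_block_flip.
    case: (boolP (in_block nu (a x))) => Hax; first by rewrite (Hflip x Hx Hax).
    by rewrite flip_out // orbF => Hc; apply/esym/eqP; rewrite -(agree_name Hx Hc).
  - rewrite /movable in_block_flip -(agree_block Hx).
    case: (boolP (in_block nu (a x))) => Hax; rewrite ?andbF //= !andbT flip_out //.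
    congr negb; apply/idP/idP => Hc.
      by have /eqP -> : b x == a x by rewrite -(agree_name Hx Hc).
    by have /eqP -> : a x == b x by rewrite (agree_name Hx Hc).
have -> : sat (M := M) b p <-> sat (M := M) (fun x => swaps ps (a1 x)) p.
  by apply: sat_coincidence => x /free_fv /Hs ->.
by rewrite sat_swaps // sat_flip.
Qed.

End Agree.

Lemma blocks_nary : nary (Th M) nu.
Proof.
apply: nary_of_bool_comb nu_gt0 _ => p.
apply: (Th_equiv_bool_comb (Phi := atoms p)) => [|a b /sat_transfer //].
exact: atoms_nary_base.
Qed.

End Nary.

Definition unnamed_blocks (mu : option nat) : pred nat :=
  if mu is Some n then fun k => k == n else fun=> true.

Lemma blocks_arity (A N : pred nat) (mu : option nat) :
  (forall n, mu = Some n -> 0 < n) -> (forall k, A k && ~~ N k = unnamed_blocks mu k) ->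
  arity_is (Th (blocks_struct A N)) mu.
Proof.
case: mu => [n|] mu_pos free_AN /=; last first.
  move=> n; have /andP [A_n N_n] : A n.+1 && ~~ N n.+1 by rewrite free_AN.
  exact: blocks_not_nary (ltn0Sn n) A_n N_n.
have n_gt0 := mu_pos n erefl.
have /andP [A_n N_n] : A n && ~~ N n by rewrite free_AN /= eqxx.
split=> [|m n_m]; last by move: (blocks_not_nary n_gt0 A_n N_n); rewrite n_m.
apply: blocks_nary => // k A_k k_n; apply: negbFE.
by have := free_AN k; rewrite A_k /= (negbTE k_n).
Qed.

Theorem theorem3p10 (mu nu : option nat)
  (hmu : forall n, mu = Some n -> 0 < n)
  (hnu : forall n, nu = Some n -> 0 < n) :
  exists (L L' : language) (T : theory L) (T' : theory L'),
    complete T /\ expansion T T' /\ arity_is T mu /\ arity_is T' nu.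
Proof.
pose A k := unnamed_blocks mu k || unnamed_blocks nu k.
pose N k := unnamed_blocks mu k && ~~ unnamed_blocks nu k.
exists (blocks_lang (unnamed_blocks mu) (fun=> false)), (blocks_lang A N).
exists (Th (blocks_struct (unnamed_blocks mu) (fun=> false))), (Th (blocks_struct A N)).
split; first exact: Th_complete.
split; first by apply: blocks_expansion => k // Hk; rewrite /A Hk.
split; apply: blocks_arity => // k; first by rewrite andbT.
by rewrite /A /N; case: (unnamed_blocks mu k); case: (unnamed_blocks nu k).
Qed.
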